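(* Let $m\ge 2$ be an integer and write the prime factorisation of $m!$ as $m!=\prod_{p\le m} p^{\alpha_p}$, where the product runs over all primes $p\le m$ and each $\alpha_p\ge 1$. Then for any primes $p<q\le m$, $$\frac{\alpha_p}{\alpha_q}\ge \left\lfloor \frac{q}{p}\right\rfloor.$$ *)

From mathcomp Require Import all_boot all_order all_algebra.
Definition alpha (m p : nat) : nat := logn p m`!.

From mathcomp Require Import all_boot all_order all_algebra.
Import GRing.Theory Num.Theory.
Local Open Scope ring_scope.

(* By Legendre's formula (logn_fact),
     alpha m p = \sum_(1 <= i < m.+1) m %/ p ^ i,
   and similarly for q.  Writing k = q %/ p, we have k * p <= q, hence
   k * p ^ i <= k ^ i * p ^ i = (k * p) ^ i <= q ^ i for i >= 1, so every
   block of q ^ i consecutive integers contains at least k blocks of p ^ i.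
   This gives the termwise bound k * (m %/ q ^ i) <= m %/ p ^ i, and summing
   yields k * alpha m q <= alpha m p.  Since q <= m, q divides m! and
   alpha m q > 0, so the inequality may be divided by alpha m q in rat. *)

Lemma divn_mul_expn_le (p q i : nat) : (0 < i)%N ->
  (q %/ p * p ^ i <= q ^ i)%N.
Proof.
move=> i_gt0; set k := (q %/ p)%N.
have k_pow : (k <= k ^ i)%N.
  case: (posnP k) => [->|k_gt0]; first by [].
  by rewrite -[X in (X <= _)%N]expn1 leq_pexp2l.
apply: (@leq_trans (k ^ i * p ^ i)); first by rewrite leq_mul2r k_pow orbT.
by rewrite -expnMn leq_exp2r // leq_divM.
Qed.

Lemma legendre_term_le (m p q i : nat) : (0 < p)%N -> (0 < i)%N ->
  (m %/ q ^ i * (q %/ p) <= m %/ p ^ i)%N.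
Proof.
move=> p_gt0 i_gt0.
rewrite leq_divRL ?expn_gt0 ?p_gt0 // -mulnA.
apply: leq_trans (leq_divM m (q ^ i)).
by rewrite leq_mul2l divn_mul_expn_le ?orbT.
Qed.

Lemma alpha_mul_div_le (m p q : nat) : prime p -> prime q ->
  (alpha m q * (q %/ p) <= alpha m p)%N.
Proof.
move=> p_pr q_pr; rewrite /alpha !logn_fact // big_distrl /=.
rewrite [X in (X <= _)%N]big_nat_cond [X in (_ <= X)%N]big_nat_cond.
apply: leq_sum => i /andP[/andP[i_gt0 _] _].
exact: legendre_term_le (prime_gt0 p_pr) i_gt0.
Qed.

(* A prime q <= m divides m!, so it occurs in its factorisation. *)
Lemma alpha_gt0 (m q : nat) : prime q -> (q <= m)%N -> (0 < alpha m q)%N.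
Proof.
move=> q_pr q_le_m.
rewrite /alpha -(pfactor_dvdn 1 q_pr (fact_gt0 m)) expn1.
by rewrite dvdn_fact // prime_gt0.
Qed.

Theorem lemma5 (m p q : nat) :
  (2 <= m)%N -> prime p -> prime q -> (p < q)%N -> (q <= m)%N ->
  ((alpha m p)%:R / (alpha m q)%:R : rat) >= ((q %/ p)%N)%:R.
Proof.
move=> _ p_pr q_pr _ q_le_m.
rewrite ler_pdivlMr ?ltr0n ?alpha_gt0 // -natrM ler_nat mulnC.
exact: alpha_mul_div_le.
Qed.
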